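(* Let $\delta\in(0,1)$ and let $f:G_\delta\to\mathbb{C}$ be a function. Suppose there are a Hilbert space $\mathcal{M}$, a unitary operator $U$ on $\mathcal{M}$ and a map $u:G_\delta\to\mathcal{M}$ (not assumed holomorphic) such that for all $\lambda,\mu\in G_\delta$, $$1-\overline{f(\mu)}f(\lambda)=\langle(1-\mu_U^*\lambda_U)u(\lambda),u(\mu)\rangle_{\mathcal{M}}.$$ Then $u$ is holomorphic on $G_\delta$.
   Context: $G_\delta=\{x+iy: x,y\in\mathbb{R},\ \frac{x^2}{(1+\delta)^2}+\frac{y^2}{(1-\delta)^2}<1\}$. For $\lambda\in G_\delta$ and a unitary $U$ on $\mathcal{M}$, $\lambda_U=(\delta U^*-\tfrac12\lambda)(1-\tfrac12\lambda U^* )^{-1}$. *)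

From mathcomp Require Import all_boot all_order all_algebra.
From mathcomp Require Import boolp classical_sets reals.
From mathcomp Require Export complex.
Set Implicit Arguments.
Unset Strict Implicit.
Unset Printing Implicit Defensive.
Import Order.TTheory GRing.Theory Num.Theory.
Local Open Scope ring_scope.
Local Open Scope classical_set_scope.

Section Defs.
Variable R : realType.
Local Notation C := R[i].

Definition cabs (z : C) : R := Num.sqrt (complex.Re z ^+ 2 + complex.Im z ^+ 2).

Definition G_delta (delta : R) : set C :=
  [set z | (complex.Re z) ^+ 2 / (1 + delta) ^+ 2 + (complex.Im z) ^+ 2 / (1 - delta) ^+ 2 < 1].

Variable M : lmodType C.

Definition ipnorm (ip : M -> M -> C) (x : M) : R := Num.sqrt (complex.Re (ip x x)).

Definition is_hilbert (ip : M -> M -> C) : Prop :=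
  [/\ (forall (a : C) (x y z : M), ip (a *: x + y) z = a * ip x z + ip y z),
      (forall x y : M, ip y x = conjc (ip x y)),
      (forall x : M, complex.Im (ip x x) = 0 /\ 0 <= complex.Re (ip x x)),
      (forall x : M, ip x x = 0 -> x = 0) &
      (forall s : nat -> M,
         (forall e : R, 0 < e -> exists N : nat, forall m n : nat,
            (N <= m)%N -> (N <= n)%N -> ipnorm ip (s m - s n) < e) ->
         exists l : M, forall e : R, 0 < e -> exists N : nat, forall n : nat,
            (N <= n)%N -> ipnorm ip (s n - l) < e)].

Definition is_adjoint (ip : M -> M -> C) (T Tstar : M -> M) : Prop :=
  forall x y : M, ip (T x) y = ip x (Tstar y).

Definition is_unitary_op (ip : M -> M -> C) (U Ustar : M -> M) : Prop :=
  [/\ linear U, is_adjoint ip U Ustar,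
      (forall x, Ustar (U x) = x) & (forall x, U (Ustar x) = x)].

Definition hadj (ip : M -> M -> C) (T : M -> M) : M -> M :=
  fun y => xget 0 [set w | forall x : M, ip (T x) y = ip x w].

(* lambda_U = (delta Ustar - lambda/2)(1 - lambda/2 Ustar)^{-1}, where
   (1 - lambda/2 Ustar)^{-1} x is the unique z with z - (lambda/2) Ustar z = x. *)
Definition lamU (delta : R) (Ustar : M -> M) (lam : C) : M -> M :=
  fun x =>
    let z := xget 0 [set z : M | z - (lam / 2) *: Ustar z = x] in
    (delta%:C)%C *: Ustar z - (lam / 2) *: z.

Definition holomorphic_on (ip : M -> M -> C) (D : set C) (u : C -> M) : Prop :=
  forall l0 : C, D l0 -> exists v : M,
    forall e : R, 0 < e -> exists d : R, 0 < d /\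
      forall h : C, h != 0 -> cabs h < d -> D (l0 + h) ->
        ipnorm ip (h^-1 *: (u (l0 + h) - u l0) - v) < e.

End Defs.

(* The hypothesis says that the vectors (u l, f l) of M + C have the same Gram
   matrix as the vectors (1, l_U (u l)) of C + M.  For a combination whose
   coefficients sum to zero the constant 1 cancels, hence
   |sum a_i u(l_i)| <= |sum a_i l_i_U (u l_i)|.
   Writing c = l/2 and z = (1 - c U^* )^-1 x one finds
   |l_U x|^2 = |x|^2 - (1 - delta^2) |z|^2 + Re ((l - delta conj l) <U^* z, z>),
   and l lies in G_delta exactly when |l - delta conj l| < 1 - delta^2, so l_U
   is a strict contraction there; by the resolvent identity l |-> l_U also has
   bounded and Lipschitz divided differences.  Applied to the difference
   quotients Q l = (u l - u l0) / (l - l0), the zero-sum inequality yields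
   |Q l - Q l'| = O(|l - l0| + |l' - l0|), so Q converges at l0 by
   completeness. *)

From mathcomp Require Import all_boot all_order all_algebra.
From mathcomp Require Import boolp classical_sets reals topology normedtype sequences.
From mathcomp Require Import ring lra.
Import Order.TTheory GRing.Theory Num.Theory.
Local Open Scope ring_scope.
Local Open Scope classical_set_scope.
Set Implicit Arguments.
Unset Strict Implicit.
Unset Printing Implicit Defensive.

Lemma subrACA (V : zmodType) (a b c d : V) : (a - b) - (c - d) = (a - c) - (b - d).
Proof. by rewrite !opprB addrACA [in RHS]addrACA [- c + _]addrC. Qed.

Lemma exists_exprn_lt (R : realType) (q e : R) : 0 <= q -> q < 1 -> 0 < e -> exists n, q ^+ n < e.
Proof.
move=> q0 q1 e0; have q1' : `|q| < 1 by rewrite ger0_norm.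
have [n _ hn] := @cvgr0_norm_lt _ R^o _ _ _ (fun n => q ^+ n) (cvg_expr q1') _ e0.
by exists n; have := hn n (leqnn n); rewrite /= ger0_norm // exprn_ge0.
Qed.

Section ComplexModulus.
Variable R : realType.
Local Notation C := R[i].
Implicit Types (a b : C) (t : R).

Lemma cabs_normc a : cabs a = Normc.normc a. Proof. by case: a. Qed.

Lemma cabs_ge0 a : 0 <= cabs a. Proof. exact: sqrtr_ge0. Qed.

Lemma cabsM a b : cabs (a * b) = cabs a * cabs b.
Proof. by rewrite !cabs_normc Normc.normcM. Qed.

Lemma cabsV a : cabs a^-1 = (cabs a)^-1.
Proof. by rewrite !cabs_normc Normc.normcV. Qed.

Lemma ler_cabsD a b : cabs (a + b) <= cabs a + cabs b.
Proof. by rewrite !cabs_normc le_normcD. Qed.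

Lemma cabsN a : cabs (- a) = cabs a.
Proof. by rewrite !cabs_normc normcN. Qed.

Lemma cabsJ a : cabs (conjc a) = cabs a.
Proof. by case: a => a b; rewrite /cabs /= sqrrN. Qed.

Lemma cabs_gt0 a : (0 < cabs a) = (a != 0).
Proof.
rewrite lt_def cabs_ge0 andbT; congr negb; apply/eqP/eqP => [|->].
  by rewrite cabs_normc => /Normc.eq0_normc.
by rewrite cabs_normc Normc.normc0.
Qed.

Lemma cabs_real t : cabs t%:C%C = `|t|.
Proof. by rewrite /cabs /= expr0n /= addr0 sqrtr_sqr. Qed.

Lemma cabs_nat n : cabs (n%:R : C) = n%:R.
Proof. by rewrite -(rmorph_nat (real_complex R)) cabs_real ger0_norm. Qed.

Lemma cabs_half a : cabs (a / 2) = cabs a / 2.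
Proof. by rewrite cabsM cabsV cabs_nat. Qed.

End ComplexModulus.

Section Ellipse.
Variables (R : realType) (delta : R).
Hypothesis delta01 : 0 < delta < 1.
Local Notation G := (G_delta delta).

Let G_delta_poly a b : G (a +i* b)%C <->
  a ^+ 2 * (1 - delta) ^+ 2 + b ^+ 2 * (1 + delta) ^+ 2 < (1 + delta) ^+ 2 * (1 - delta) ^+ 2.
Proof.
have /andP[d0 d1] := delta01.
have P0 : 0 < (1 + delta) ^+ 2 by rewrite exprn_gt0 //; lra.
have Q0 : 0 < (1 - delta) ^+ 2 by rewrite exprn_gt0 //; lra.
rewrite /G_delta /= -(ltr_pM2r (mulr_gt0 P0 Q0)) mul1r.
suff -> : (a ^+ 2 / (1 + delta) ^+ 2 + b ^+ 2 / (1 - delta) ^+ 2)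
    * ((1 + delta) ^+ 2 * (1 - delta) ^+ 2)
  = a ^+ 2 * (1 - delta) ^+ 2 + b ^+ 2 * (1 + delta) ^+ 2 by [].
by field; rewrite !gt_eqF //; lra.
Qed.

Lemma G_delta_cabs_lt l : G l -> cabs (l - delta%:C%C * conjc l) < 1 - delta ^+ 2.
Proof.
have /andP[d0 d1] := delta01.
case: l => a b /G_delta_poly Gab; rewrite /cabs /=.
rewrite -(ltr_pXn2r (_ : 0 < 2)%N) ?nnegrE ?sqrtr_ge0 ?subr_ge0 ?sqr_ge0 //; last first.
  by rewrite expr_le1 //; lra.
by rewrite sqr_sqrtr ?addr_ge0 ?sqr_ge0 //; nra.
Qed.

Lemma G_delta_half_le l : G l -> cabs (l / 2) <= (1 + delta) / 2.
Proof.
have /andP[d0 d1] := delta01.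
case: l => a b /G_delta_poly Gab; rewrite cabs_half ler_pM2r ?invr_gt0 // /cabs /=.
rewrite -(ler_pXn2r (_ : 0 < 2)%N) ?nnegrE ?sqrtr_ge0 //; last lra.
rewrite sqr_sqrtr ?addr_ge0 ?sqr_ge0 //.
have Q0 : 0 < (1 - delta) ^+ 2 by rewrite exprn_gt0 // subr_gt0.
have QP : (1 - delta) ^+ 2 < (1 + delta) ^+ 2 by rewrite ltrXn2r ?nnegrE //; lra.
have : 0 <= b ^+ 2 * ((1 + delta) ^+ 2 - (1 - delta) ^+ 2).
  by rewrite mulr_ge0 ?sqr_ge0 ?subr_ge0 ?ltW.
rewrite -(ler_pM2r Q0); nra.
Qed.

Lemma G_delta_scale s l : 0 <= s <= 1 -> G l -> G (s%:C%C * l).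
Proof.
move=> /andP[s0 s1]; case: l => a b; rewrite !G_delta_poly /= !mul0r subr0 addr0.
apply: le_lt_trans.
have -> : (s * a) ^+ 2 * (1 - delta) ^+ 2 + (s * b) ^+ 2 * (1 + delta) ^+ 2 =
  s ^+ 2 * (a ^+ 2 * (1 - delta) ^+ 2 + b ^+ 2 * (1 + delta) ^+ 2) by ring.
apply: ler_piMl.
  by rewrite addr_ge0 // mulr_ge0 ?sqr_ge0.
by rewrite expr_le1.
Qed.

Let G_delta1 : G 1.
Proof.
have /andP[d0 d1] := delta01.
rewrite -[1]/(1 +i* 0)%C G_delta_poly expr1n expr0n mul0r addr0 mul1r.
by rewrite -{1}[(1 - delta) ^+ 2]mul1r ltr_pM2r ?exprn_gt0 ?subr_gt0 ?expr_gt1 //; lra.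
Qed.

Lemma G_delta_limit_point l : G l ->
  forall e, 0 < e -> exists p, [/\ G p, p != l & cabs (p - l) < e].
Proof.
have /andP[d0 d1] := delta01; move=> Gl e e0.
have [->|l0] := eqVneq l 0.
  pose t := Order.min e 1 / 2.
  have t0 : 0 < t by rewrite divr_gt0 // lt_min e0 ltr01.
  have me : Order.min e 1 <= e by rewrite ge_min lexx.
  have m1 : Order.min e 1 <= 1 by rewrite ge_min lexx orbT.
  have t1 : t <= 1 by rewrite /t; lra.
  have te : t < e by rewrite /t; lra.
  exists (t%:C%C * 1); split.
  - by apply: G_delta_scale => //; apply/andP; split; lra.
  - by rewrite mulr1 (inj_eq (@complexI _)) gt_eqF.
  - by rewrite subr0 mulr1 cabs_real gtr0_norm.
have cl0 : 0 < cabs l by rewrite cabs_gt0.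
pose t := Order.min (e / cabs l) 1 / 2.
have t0 : 0 < t by rewrite divr_gt0 // lt_min divr_gt0 ?ltr01.
have me : Order.min (e / cabs l) 1 * cabs l <= e by rewrite -ler_pdivlMr // ge_min lexx.
have m1 : Order.min (e / cabs l) 1 <= 1 by rewrite ge_min lexx orbT.
have t1 : t <= 1 by rewrite /t; lra.
have tl : t * cabs l < e by rewrite /t mulrAC; lra.
have pl : (1 - t)%:C%C * l - l = (- t)%:C%C * l.
  by rewrite rmorphB rmorph1 mulrBl mul1r addrAC subrr add0r rmorphN mulNr.
exists ((1 - t)%:C%C * l); split.
- by apply: G_delta_scale => //; apply/andP; split; lra.
- by rewrite -subr_eq0 pl mulf_neq0 // (inj_eq (@complexI _)) oppr_eq0 gt_eqF.
- by rewrite pl cabsM cabs_real normrN gtr0_norm.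
Qed.

End Ellipse.

Section InnerProduct.
Variables (R : realType) (M : lmodType R[i]) (ip : M -> M -> R[i]).
Local Notation C := R[i].
Local Notation nrm := (ipnorm ip).
Hypothesis ipDZl : forall (a : C) (x y z : M), ip (a *: x + y) z = a * ip x z + ip y z.
Hypothesis ipC : forall x y : M, ip y x = conjc (ip x y).
Hypothesis ip_self_ge0 : forall x : M, complex.Im (ip x x) = 0 /\ 0 <= complex.Re (ip x x).
Hypothesis ip_self_eq0 : forall x : M, ip x x = 0 -> x = 0.
Implicit Types (a : C) (x y z : M).

Lemma ip0l z : ip 0 z = 0.
Proof.
have := ipDZl 1 0 0 z; rewrite scaler0 addr0 mul1r => /eqP.
by rewrite -{1}[ip 0 z]add0r (inj_eq (addIr _)) eq_sym => /eqP.
Qed.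

Lemma ipDl x y z : ip (x + y) z = ip x z + ip y z.
Proof. by have := ipDZl 1 x y z; rewrite scale1r mul1r. Qed.

Lemma ipZl a x z : ip (a *: x) z = a * ip x z.
Proof. by rewrite -[a *: x]addr0 ipDZl ip0l addr0. Qed.

Lemma ipNl x z : ip (- x) z = - ip x z.
Proof. by rewrite -scaleN1r ipZl mulN1r. Qed.

Lemma ipBl x y z : ip (x - y) z = ip x z - ip y z.
Proof. by rewrite ipDl ipNl. Qed.

Lemma ipDr x y z : ip z (x + y) = ip z x + ip z y.
Proof. by rewrite (ipC x) (ipC y) (ipC (x + y)) ipDl rmorphD. Qed.

Lemma ipZr a x z : ip z (a *: x) = conjc a * ip z x.
Proof. by rewrite (ipC x) (ipC (a *: x)) ipZl rmorphM. Qed.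

Lemma ipNr x z : ip z (- x) = - ip z x.
Proof. by rewrite (ipC x) (ipC (- x)) ipNl rmorphN. Qed.

Lemma ipBr x y z : ip z (x - y) = ip z x - ip z y.
Proof. by rewrite ipDr ipNr. Qed.

Lemma ipnorm_ge0 x : 0 <= nrm x. Proof. exact: sqrtr_ge0. Qed.

Lemma ipnorm_sqr x : nrm x ^+ 2 = complex.Re (ip x x).
Proof. by rewrite sqr_sqrtr //; case: (ip_self_ge0 x). Qed.

Lemma ip_self x : ip x x = (nrm x ^+ 2)%:C%C.
Proof. by rewrite ipnorm_sqr; case: (ip_self_ge0 x); case: (ip x x) => a b /= ->. Qed.

Lemma ipnorm_sqrD x y :
  nrm (x + y) ^+ 2 = nrm x ^+ 2 + nrm y ^+ 2 + 2 * complex.Re (ip x y).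
Proof.
rewrite !ipnorm_sqr ipDl !ipDr [ip y x]ipC.
by case: (ip x x) (ip x y) (ip y y) => [? ?] [? ?] [? ?] /=; ring.
Qed.

Lemma ipnormZ a x : nrm (a *: x) = cabs a * nrm x.
Proof.
rewrite /ipnorm ipZl ipZr ip_self -sqrtrM; last by rewrite addr_ge0 ?sqr_ge0.
by case: a => a1 a2 /=; congr Num.sqrt; ring.
Qed.

Lemma ipnormN x : nrm (- x) = nrm x.
Proof. by rewrite /ipnorm ipNl ipNr opprK. Qed.

Lemma ipnorm0 : nrm 0 = 0.
Proof. by rewrite /ipnorm ip0l sqrtr0. Qed.

Lemma ipnorm_eq0 x : nrm x = 0 -> x = 0.
Proof. by move=> x0; apply: ip_self_eq0; rewrite ip_self x0 expr0n. Qed.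

Lemma Re_ip_le x y : complex.Re (ip x y) <= nrm x * nrm y.
Proof.
set a := nrm x; set b := nrm y.
have := sqr_ge0 (nrm (b%:C%C *: x - a%:C%C *: y)).
rewrite ipnorm_sqrD ipnormN !ipnormZ !cabs_real ipZl ipNr ipZr conjc_real.
rewrite !ger0_norm ?ipnorm_ge0 // -/a -/b.
have -> : complex.Re (b%:C * - (a%:C * ip x y))%C = - (a * b) * complex.Re (ip x y).
  by case: (ip x y) => ? ? /=; ring.
have [a0|a0] := eqVneq a 0.
  by rewrite a0 (@ipnorm_eq0 x a0) ip0l mul0r.
have [b0|b0] := eqVneq b 0.
  by rewrite b0 (@ipnorm_eq0 y b0) ipC ip0l conjc0 mulr0.
have ab0 : 0 < a * b by rewrite mulr_gt0 // lt_def ?a0 ?b0 ipnorm_ge0.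
move=> h; rewrite -(ler_pM2l ab0); nra.
Qed.

Lemma ler_ipnormD x y : nrm (x + y) <= nrm x + nrm y.
Proof.
rewrite -(ler_pXn2r (_ : 0 < 2)%N) ?nnegrE ?addr_ge0 ?ipnorm_ge0 //.
by rewrite ipnorm_sqrD; have := Re_ip_le x y; lra.
Qed.

Lemma ler_ipnormB x y : nrm (x - y) <= nrm x + nrm y.
Proof. by rewrite -(ipnormN y) ler_ipnormD. Qed.

Lemma ipdistC x y : nrm (x - y) = nrm (y - x).
Proof. by rewrite -ipnormN opprB. Qed.

Lemma ler_ipdistD x y z : nrm (x - z) <= nrm (x - y) + nrm (y - z).
Proof. by have := ler_ipnormD (x - y) (y - z); rewrite addrA subrK. Qed.

Lemma ipnorm_small_eq0 x : (forall e, 0 < e -> nrm x < e) -> x = 0.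
Proof.
move=> small; apply: ipnorm_eq0; apply/le_anti; rewrite ipnorm_ge0 andbT.
by rewrite leNgt; apply/negP => /small; rewrite ltxx.
Qed.

Lemma ipnorm_sqr_exchange (d : R) (c : C) w z : nrm w = nrm z ->
  nrm (d%:C%C *: w - c *: z) ^+ 2 = nrm (z - c *: w) ^+ 2 + (d ^+ 2 - 1) * nrm z ^+ 2
    + complex.Re ((c *+ 2 - (d%:C%C * conjc c) *+ 2) * ip w z).
Proof.
move=> wz; rewrite !ipnorm_sqr !(ipBl, ipBr, ipZl, ipZr) (ipC w z) !ip_self wz.
by case: (ip w z) c => [? ?] [? ?] /=; ring.
Qed.

Lemma hadjP (T : M -> M) y : (exists w, forall x, ip (T x) y = ip x w) ->
  forall x, ip (T x) y = ip x (hadj ip T y).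
Proof. exact: xgetPex. Qed.

Section Complete.
Hypothesis ip_complete : forall s : nat -> M,
  (forall e : R, 0 < e -> exists N : nat, forall m n : nat,
     (N <= m)%N -> (N <= n)%N -> nrm (s m - s n) < e) ->
  exists l : M, forall e : R, 0 < e -> exists N : nat, forall n : nat,
     (N <= n)%N -> nrm (s n - l) < e.

Lemma geometric_cvg (s : nat -> M) (q K : R) : 0 <= q -> q < 1 ->
    (forall n, nrm (s n.+1 - s n) <= q ^+ n * K) ->
  exists l : M, forall e : R, 0 < e -> exists N : nat, forall n : nat,
     (N <= n)%N -> nrm (s n - l) < e.
Proof.
move=> q0 q1 step.
have K0 : 0 <= K.
  by rewrite -[K]mul1r -(expr0 q); exact: le_trans (ipnorm_ge0 _) (step 0%N).
have tail n j : nrm (s (n + j)%N - s n) * (1 - q) <= q ^+ n * (1 - q ^+ j) * K.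
  elim: j => [|j IH]; first by rewrite addn0 subrr ipnorm0 expr0 subrr mulr0 !mul0r.
  rewrite addnS; apply: le_trans (ler_wpM2r _ (ler_ipdistD _ (s (n + j)%N) _)) _.
    by rewrite subr_ge0 ltW.
  rewrite mulrDl; apply: le_trans (lerD (ler_wpM2r _ (step _)) IH) _.
    by rewrite subr_ge0 ltW.
  by rewrite exprD exprS le_eqVlt; apply/orP; left; apply/eqP; ring.
have tail_le n m : (n <= m)%N -> nrm (s m - s n) * (1 - q) <= q ^+ n * K.
  move=> nm; rewrite -(subnKC nm); apply: le_trans (tail n (m - n)%N) _.
  rewrite mulrBr mulr1 mulrBl lerBlDr lerDl.
  by rewrite !mulr_ge0 ?exprn_ge0.
apply: ip_complete => e e0.
have eK : 0 < e * (1 - q) / (K + 1) by rewrite !mulr_gt0 ?invr_gt0 ?subr_gt0; lra.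
have [N qN] := exists_exprn_lt q0 q1 eK.
have near n m : (N <= n)%N -> (n <= m)%N -> nrm (s m - s n) < e.
  move=> Nn nm; rewrite -(ltr_pM2r (_ : 0 < 1 - q)) ?subr_gt0 //.
  apply: le_lt_trans (tail_le _ _ nm) _.
  have : q ^+ n <= q ^+ N by rewrite ler_wiXn2l // ltW.
  move: qN; rewrite ltr_pdivlMr; last lra.
  have := exprn_ge0 n q0; nra.
exists N => m n Nm Nn; case: (leqP n m) => [nm|/ltnW mn]; first exact: near.
by rewrite ipdistC; apply: near.
Qed.

Lemma cauchy_limit (D : set C) (l0 : C) (Q : C -> M) (B rho : R) :
    0 <= B -> 0 < rho ->
    (forall e, 0 < e -> exists p, [/\ D p, p != l0 & cabs (p - l0) < e]) ->
    (forall p p', D p -> D p' -> p != l0 -> p' != l0 ->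
       cabs (p - l0) < rho -> cabs (p' - l0) < rho ->
       nrm (Q p - Q p') <= B * (cabs (p - l0) + cabs (p' - l0))) ->
  exists v, forall e, 0 < e -> exists2 d, 0 < d &
    forall p, D p -> p != l0 -> cabs (p - l0) < d -> nrm (Q p - v) < e.
Proof.
move=> B0 rho0 l0_lim QB.
have half_gt0 : 0 < 2^-1 :> R by rewrite invr_gt0.
have half1 : 2^-1 < 1 :> R by rewrite invf_lt1 ?ltr1n.
have half0 := ltW half_gt0.
have [ps psP] := choice (fun n => l0_lim _ (mulr_gt0 rho0 (exprn_gt0 n half_gt0))).
have ps_rho n : cabs (ps n - l0) < rho.
  have [_ _ /lt_le_trans] := psP n; apply; apply: ler_piMr; first exact: ltW.
  exact: exprn_ile1 half0 (ltW half1).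
have tail e : 0 < e -> exists N, forall n, (N <= n)%N -> B * cabs (ps n - l0) < e.
  have BR0 : 0 <= B * rho := mulr_ge0 B0 (ltW rho0).
  move=> e0; have eB : 0 < e / (B * rho + 1) by rewrite divr_gt0 //; lra.
  have [N hN] := exists_exprn_lt half0 half1 eB.
  exists N => n Nn; have [_ _ pn] := psP n.
  apply: (le_lt_trans (ler_wpM2l B0 (ltW pn))); rewrite mulrA.
  apply: (le_lt_trans (ler_wpM2l BR0 (ler_wiXn2l half0 (ltW half1) Nn))).
  move: hN; rewrite ltr_pdivlMr; last lra.
  have := exprn_ge0 N half0; nra.
have [v sv] : exists v, forall e, 0 < e -> exists N, forall n, (N <= n)%N -> nrm (Q (ps n) - v) < e.
  apply: ip_complete => e e0; have [N hN] := tail _ (divr_gt0 e0 (ltr0Sn _ 1)).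
  exists N => m n Nm Nn; have [Dm m0 _] := psP m; have [Dn n0 _] := psP n.
  apply: le_lt_trans (QB _ _ Dm Dn m0 n0 (ps_rho m) (ps_rho n)) _.
  by rewrite mulrDr; have := hN m Nm; have := hN n Nn; lra.
exists v => e e0; pose eta := Order.min rho (e / 3 / (B + 1)).
have B1 : 0 < B + 1 by lra.
have eta0 : 0 < eta by rewrite lt_min rho0 !divr_gt0.
exists eta => // p Dp p0 pl.
have [N1 hN1] := tail _ (divr_gt0 e0 (ltr0Sn _ 2)).
have [N2 hN2] := sv _ (divr_gt0 e0 (ltr0Sn _ 2)).
have [Dn n0 _] := psP (maxn N1 N2).
have prho : cabs (p - l0) < rho by apply: lt_le_trans pl _; rewrite ge_min lexx.
have Bp : B * cabs (p - l0) < e / 3.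
  have : cabs (p - l0) * (B + 1) < e / 3.
    by rewrite -ltr_pdivlMr //; apply: lt_le_trans pl _; rewrite ge_min lexx orbT.
  have := cabs_ge0 (p - l0); nra.
apply: le_lt_trans (ler_ipdistD _ (Q (ps (maxn N1 N2))) _) _.
apply: le_lt_trans (lerD (QB _ _ Dp Dn p0 n0 prho (ps_rho _)) (lexx _)) _.
rewrite mulrDr; have := hN1 _ (leq_maxl N1 N2); have := hN2 _ (leq_maxr N1 N2); lra.
Qed.

Section IsometryResolvent.
Variable T : M -> M.
Hypothesis T_linear : linear T.
Hypothesis T_isometry : forall x, nrm (T x) = nrm x.
Variable c : C.
Hypothesis c_lt1 : cabs c < 1.

Let TB : {morph T : x y / x - y} := zmod_morphism_linear T_linear.

Let T0 : T 0 = 0.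
Proof. by have := TB 0 0; rewrite !subrr. Qed.

Lemma ipnorm_resolvent_ge z : nrm z * (1 - cabs c) <= nrm (z - c *: T z).
Proof.
have := ler_ipnormD (z - c *: T z) (c *: T z); rewrite subrK ipnormZ T_isometry.
by rewrite mulrBr mulr1 lerBlDr [_ * cabs c]mulrC.
Qed.

Lemma resolvent_uniq z z' : z - c *: T z = z' - c *: T z' -> z = z'.
Proof.
move=> e; apply/eqP; rewrite -subr_eq0; apply/eqP; apply: ipnorm_eq0.
have := ipnorm_resolvent_ge (z - z').
rewrite TB scalerBr subrACA e subrr ipnorm0 pmulr_lle0 ?subr_gt0 //.
by move=> le0; apply/le_anti; rewrite le0 ipnorm_ge0.
Qed.

Lemma resolvent_exists x : exists z, z - c *: T z = x.
Proof.
pose s n := iter n (fun z => x + c *: T z) 0.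
have sS n : s n.+1 = x + c *: T (s n) by [].
have step n : nrm (s n.+1 - s n) <= cabs c ^+ n * nrm x.
  elim: n => [|n IH]; first by rewrite expr0 mul1r sS /= T0 scaler0 !addr0 subr0.
  have -> : s n.+2 - s n.+1 = c *: T (s n.+1 - s n).
    by rewrite TB scalerBr [s n.+2]sS {2}(sS n) opprD addrACA subrr add0r.
  by rewrite ipnormZ T_isometry exprS -mulrA ler_wpM2l ?cabs_ge0.
have [l sl] := geometric_cvg (cabs_ge0 c) c_lt1 step.
exists l; apply/eqP; rewrite -subr_eq0; apply/eqP; apply: ipnorm_small_eq0 => e e0.
have [N sNl] := sl _ (divr_gt0 e0 (ltr0Sn _ 1)).
have -> : l - c *: T l - x = (l - s N.+1) + c *: T (s N - l).
  by rewrite sS TB scalerBr opprD !addrA subrK addrAC.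
apply: le_lt_trans (ler_ipnormD _ _) _; rewrite ipnormZ T_isometry ipdistC.
have cb : cabs c * nrm (s N - l) <= nrm (s N - l) by rewrite ler_piMl ?ipnorm_ge0 // ltW.
have := sNl N.+1 (leqnSn _); have := sNl N (leqnn _); lra.
Qed.

End IsometryResolvent.

Section GramHolomorphy.
Variables (D : set C) (A : C -> M -> M) (f : C -> C) (u : C -> M).
Hypothesis A_linear : forall p, D p -> linear (A p).
Hypothesis gram : forall p p', D p -> D p' ->
  ip (u p) (u p') = 1 - conjc (f p') * f p + ip (A p (u p)) (A p' (u p')).

Lemma ipnorm_zero_sum_le p1 p2 p3 (a1 a2 : C) : D p1 -> D p2 -> D p3 ->
  nrm (a1 *: u p1 + a2 *: u p2 - (a1 + a2) *: u p3) <=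
  nrm (a1 *: A p1 (u p1) + a2 *: A p2 (u p2) - (a1 + a2) *: A p3 (u p3)).
Proof.
(* the constants 1 of the Gram identity cancel, leaving - |sum a_i f(p_i)|^2 *)
move=> D1 D2 D3; rewrite -(ler_pXn2r (_ : 0 < 2)%N) ?nnegrE ?ipnorm_ge0 // !ipnorm_sqr.
set y := _ - _ *: u p3; set X := _ - _ *: A p3 _.
set F := a1 * f p1 + a2 * f p2 - (a1 + a2) * f p3.
suff -> : ip y y = ip X X - F * conjc F by case: (ip X X) F => [? ?] [? ?] /=; nra.
rewrite /y /X !(ipDl, ipDr, ipBl, ipBr, ipNl, ipNr, ipZl, ipZr) !gram // /F.
by rewrite !(rmorphD, rmorphB, rmorphM, rmorphN); ring.
Qed.

Section AtPoint.
Variable l0 : C.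
Hypothesis D_l0 : D l0.
Variables (r K K' : R) (W : C -> M -> M).
Hypotheses (r_ge0 : 0 <= r) (r_lt1 : r < 1) (K_ge0 : 0 <= K) (K'_ge0 : 0 <= K').
Hypothesis A_contraction : forall x, nrm (A l0 x) <= r * nrm x.
Hypothesis A_divided : forall p x, D p -> A p x - A l0 x = (p - l0) *: W p x.
Hypothesis W_bounded : forall p x, D p -> nrm (W p x) <= K * nrm x.
Hypothesis W_lipschitz : forall p p' x, D p -> D p' ->
  nrm (W p x - W p' x) <= K' * cabs (p - p') * nrm x.

Definition diffquot p := (p - l0)^-1 *: (u p - u l0).

Let A0B x y : A l0 (x - y) = A l0 x - A l0 y.
Proof. exact: (zmod_morphism_linear (A_linear D_l0) x y). Qed.

Let A0Z a x : A l0 (a *: x) = a *: A l0 x.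
Proof. exact: (scalable_linear (A_linear D_l0) a x). Qed.

Lemma ipnorm_uB_le p : D p -> K * cabs (p - l0) * 2 <= 1 - r ->
  nrm (u p - u l0) * (1 - r) <= 2 * K * cabs (p - l0) * nrm (u l0).
Proof.
move=> Dp small; have := ipnorm_zero_sum_le 1 (-1) Dp D_l0 D_l0.
rewrite subrr !scale0r !subr0 !scale1r !scaleN1r.
have -> : A p (u p) - A l0 (u l0) = (p - l0) *: W p (u p) + A l0 (u p - u l0).
  by rewrite -A_divided // A0B subrKA.
move=> /le_trans /(_ (ler_ipnormD _ _)); rewrite ipnormZ => hd.
have hA := A_contraction (u p - u l0).
have hu : nrm (u p) <= nrm (u l0) + nrm (u p - u l0).
  by have := ler_ipnormD (u l0) (u p - u l0); rewrite addrC subrK.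
have t0 := cabs_ge0 (p - l0); have d0 := ipnorm_ge0 (u p - u l0).
have h1 : cabs (p - l0) * nrm (W p (u p)) <= cabs (p - l0) * (K * (nrm (u l0) + nrm (u p - u l0))).
  by rewrite ler_wpM2l // (le_trans (W_bounded _ Dp)) // ler_wpM2l.
have h2 := ler_wpM2r d0 small.
have := K_ge0; nra.
Qed.

Lemma ipnorm_diffquotB_le p p' : D p -> D p' -> p != l0 -> p' != l0 ->
  nrm (diffquot p - diffquot p') * (1 - r) <=
    K * nrm (u p - u p') + K' * cabs (p - p') * nrm (u p').
Proof.
rewrite -(subr_eq0 p) -(subr_eq0 p') => Dp Dp' pl p'l.
have lin_u : (p - l0)^-1 *: u p + - (p' - l0)^-1 *: u p'
    - ((p - l0)^-1 + - (p' - l0)^-1) *: u l0 = diffquot p - diffquot p'.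
  by rewrite /diffquot scalerDl !scaleNr !scalerBr subrACA.
have AW q x : D q -> q - l0 != 0 -> (q - l0)^-1 *: A q x = (q - l0)^-1 *: A l0 x + W q x.
  move=> Dq ql; rewrite -(subrK (A l0 x) (A q x)) A_divided //.
  by rewrite scalerDr scalerA mulVf // scale1r addrC.
have lin_A : (p - l0)^-1 *: A p (u p) + - (p' - l0)^-1 *: A p' (u p')
    - ((p - l0)^-1 + - (p' - l0)^-1) *: A l0 (u l0) =
    A l0 (diffquot p - diffquot p') + (W p (u p) - W p' (u p')).
  rewrite -lin_u !scaleNr (AW _ _ Dp pl) (AW _ _ Dp' p'l) (A0B (_ - _)) (A0B (_ *: _)) !A0Z.
  by rewrite opprD addrACA [LHS]addrAC.
have := ipnorm_zero_sum_le (p - l0)^-1 (- (p' - l0)^-1) Dp Dp' D_l0.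
rewrite lin_u lin_A => /le_trans /(_ (ler_ipnormD _ _)) hQ.
have WB : W p (u p - u p') = W p (u p) - W p (u p').
  apply: (scalerI pl); rewrite scalerBr -!A_divided //.
  by rewrite (zmod_morphism_linear (A_linear Dp) (u p) (u p')) A0B subrACA.
have hW : nrm (W p (u p) - W p' (u p')) <= K * nrm (u p - u p') + K' * cabs (p - p') * nrm (u p').
  rewrite -(subrK (W p (u p')) (W p (u p))) -WB -addrA.
  exact: le_trans (ler_ipnormD _ _) (lerD (W_bounded _ Dp) (W_lipschitz _ Dp Dp')).
have := A_contraction (diffquot p - diffquot p'); lra.
Qed.

Lemma diffquot_cauchy : exists B rho, [/\ 0 <= B, 0 < rho &
  forall p p', D p -> D p' -> p != l0 -> p' != l0 ->
    cabs (p - l0) < rho -> cabs (p' - l0) < rho ->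
    nrm (diffquot p - diffquot p') <= B * (cabs (p - l0) + cabs (p' - l0))].
Proof.
have r1 : 0 < 1 - r by rewrite subr_gt0.
have K0 := K_ge0; have K'0 := K'_ge0; have r0 := r_ge0.
set n0 := nrm (u l0); have n0_ge0 : 0 <= n0 := ipnorm_ge0 _.
set C0 := 2 * K * n0 / (1 - r).
have C0_ge0 : 0 <= C0.
  by apply: divr_ge0; [apply: mulr_ge0 => //; apply: mulr_ge0 | exact: ltW].
pose rho := Order.min 1 ((1 - r) / (2 * K + 1)).
have rho0 : 0 < rho by rewrite lt_min ltr01 divr_gt0 //; lra.
have rho1 : rho <= 1 by rewrite ge_min lexx.
have rhoK : rho * (2 * K + 1) <= 1 - r by rewrite -ler_pdivlMr ?ge_min ?lexx ?orbT //; lra.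
have ucont p : D p -> cabs (p - l0) < rho -> nrm (u p - u l0) <= C0 * cabs (p - l0).
  move=> Dp pl; rewrite /C0 mulrAC ler_pdivlMr // mulrAC.
  apply: ipnorm_uB_le => //; have := cabs_ge0 (p - l0); nra.
exists ((K * C0 + K' * (n0 + C0)) / (1 - r)), rho; split => //.
  apply: divr_ge0; last exact: ltW.
  by apply: addr_ge0; apply: mulr_ge0 => //; apply: addr_ge0.
move=> p p' Dp Dp' pl p'l prho p'rho; rewrite mulrAC ler_pdivlMr //.
apply: le_trans (ipnorm_diffquotB_le Dp Dp' pl p'l) _.
have e1 := ucont _ Dp prho; have e2 := ucont _ Dp' p'rho.
have e3 : nrm (u p - u p') <= C0 * (cabs (p - l0) + cabs (p' - l0)).
  rewrite mulrDr; apply: le_trans (ler_ipdistD _ (u l0) _) _.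
  by rewrite (ipdistC (u l0)); lra.
have e4 : nrm (u p') <= n0 + C0.
  have := ler_ipnormD (u l0) (u p' - u l0); rewrite addrC subrK -/n0.
  have := ler_wpM2l C0_ge0 (ltW (lt_le_trans p'rho rho1)); lra.
have e5 : cabs (p - p') <= cabs (p - l0) + cabs (p' - l0).
  by rewrite -(cabsN (p' - l0)); apply: le_trans (ler_cabsD _ _); rewrite opprB addrA subrK.
have h1 := ler_wpM2l K0 e3.
have h2 := ler_wpM2l K'0 (ler_pM (cabs_ge0 _) (ipnorm_ge0 _) e5 e4).
rewrite mulrA in h2; nra.
Qed.

Lemma gram_derivable_at :
    (forall e, 0 < e -> exists p, [/\ D p, p != l0 & cabs (p - l0) < e]) ->
  exists v : M, forall e : R, 0 < e -> exists d : R, 0 < d /\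
    forall h : C, h != 0 -> cabs h < d -> D (l0 + h) ->
      nrm (h^-1 *: (u (l0 + h) - u l0) - v) < e.
Proof.
move=> l0_lim; have [B [rho [B0 rho0 QB]]] := diffquot_cauchy.
have [v Qv] := cauchy_limit B0 rho0 l0_lim QB.
exists v => e /Qv[d d0 dv]; exists d; split=> // h h0 hd Dh.
have hE : l0 + h - l0 = h by rewrite addrC addKr.
by have := dv _ Dh; rewrite /diffquot hE -subr_eq0 hE; apply.
Qed.

End AtPoint.
End GramHolomorphy.

Section Unitary.
Variables U Ustar : M -> M.
Hypothesis U_linear : linear U.
Hypothesis U_adjoint : is_adjoint ip U Ustar.
Hypothesis UK : cancel U Ustar.
Hypothesis UstarK : cancel Ustar U.

Let U_isometry x : nrm (U x) = nrm x.
Proof. by rewrite /ipnorm U_adjoint UK. Qed.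

Lemma ip_Ustar_l x y : ip (Ustar x) y = ip x (U y).
Proof. by rewrite ipC -U_adjoint -ipC. Qed.

Let Ustar_isometry x : nrm (Ustar x) = nrm x.
Proof. by rewrite /ipnorm ip_Ustar_l UstarK. Qed.

Lemma Ustar_linear : linear Ustar.
Proof. by move=> a x y; apply: (can_inj UK); rewrite U_linear !UstarK. Qed.

Let UstarD : {morph Ustar : x y / x + y} := (GRing.semilinear_linear Ustar_linear).2.
Let UstarB : {morph Ustar : x y / x - y} := zmod_morphism_linear Ustar_linear.
Let UstarZ : scalable Ustar := scalable_linear Ustar_linear.

Definition resolvent (c : C) (x : M) : M := xget 0 [set z | z - c *: Ustar z = x].

Section Resolvent.
Variable c : C.
Hypothesis c_lt1 : cabs c < 1.

Lemma resolventP x : resolvent c x - c *: Ustar (resolvent c x) = x.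
Proof. exact: (xgetPex 0 (resolvent_exists Ustar_linear Ustar_isometry c_lt1 x)). Qed.

Lemma resolvent_eq x z : z - c *: Ustar z = x -> resolvent c x = z.
Proof.
by move=> zx; apply: (resolvent_uniq Ustar_linear Ustar_isometry c_lt1); rewrite resolventP.
Qed.

Lemma resolventD x y : resolvent c (x + y) = resolvent c x + resolvent c y.
Proof. by apply: resolvent_eq; rewrite UstarD scalerDr opprD addrACA !resolventP. Qed.

Lemma resolventZ a x : resolvent c (a *: x) = a *: resolvent c x.
Proof.
by apply: resolvent_eq; rewrite UstarZ scalerA mulrC -scalerA -scalerBr resolventP.
Qed.

Lemma ipnorm_resolvent_le x : nrm (resolvent c x) * (1 - cabs c) <= nrm x.
Proof. by have := ipnorm_resolvent_ge Ustar_isometry c (resolvent c x); rewrite resolventP. Qed.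

End Resolvent.

Lemma resolvent_identity c c' x : cabs c < 1 -> cabs c' < 1 ->
  resolvent c' x - resolvent c x = (c' - c) *: resolvent c (Ustar (resolvent c' x)).
Proof.
move=> c1 c'1; rewrite -resolventZ //; symmetry; apply: resolvent_eq => //.
set z' := resolvent c' x; have zx := resolventP c1 x; have z'x := resolventP c'1 x.
rewrite -/z' in z'x; set z := resolvent c x in zx *.
by rewrite UstarB scalerBr subrACA zx -z'x scalerBl opprB addrC subrKA.
Qed.

Lemma ipnorm_resolventB_le c c' (q : R) x : cabs c <= q -> cabs c' <= q -> q < 1 ->
  nrm (resolvent c' x - resolvent c x) * (1 - q) ^+ 2 <= cabs (c' - c) * nrm x.
Proof.
move=> cq c'q q1; have c1 := le_lt_trans cq q1; have c'1 := le_lt_trans c'q q1.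
rewrite resolvent_identity // ipnormZ -mulrA ler_wpM2l ?cabs_ge0 //.
set z' := resolvent c' x; set g := resolvent c (Ustar z').
have gz' := ipnorm_resolvent_le c1 (Ustar z'); rewrite -/g Ustar_isometry in gz'.
have z'x : nrm z' * (1 - cabs c') <= nrm x := ipnorm_resolvent_le c'1 x.
have g0 := ipnorm_ge0 g; have z'0 := ipnorm_ge0 z'.
have : nrm g * (1 - q) <= nrm z' by apply: le_trans gz'; apply: ler_wpM2l; lra.
have : nrm z' * (1 - q) <= nrm x by apply: le_trans z'x; apply: ler_wpM2l; lra.
rewrite expr2 mulrA; move=> h1 h2; apply: le_trans h1; apply: ler_wpM2r; lra.
Qed.

Variable delta : R.

Definition cayley (c : C) (x : M) : M :=
  delta%:C%C *: Ustar (resolvent c x) - c *: resolvent c x.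

Lemma lamU_cayley lam : lamU delta Ustar lam = cayley (lam / 2).
Proof. by []. Qed.

Lemma cayley_linear c : cabs c < 1 -> linear (cayley c).
Proof.
move=> c1 a x y; rewrite /cayley resolventD // resolventZ // UstarD UstarZ.
by rewrite scalerBr !scalerDr !scalerA !(mulrC a) opprD addrACA.
Qed.

Lemma cayley_adjoint c y : cabs c < 1 -> exists w, forall x, ip (cayley c x) y = ip x w.
Proof.
move=> c1; have cJ1 : cabs (conjc c) < 1 by rewrite cabsJ.
have [w wy] := resolvent_exists U_linear U_isometry cJ1 (delta%:C%C *: U y - conjc c *: y).
exists w => x; set z := resolvent c x.
have -> : ip (cayley c x) y = ip z (delta%:C%C *: U y - conjc c *: y).
  by rewrite /cayley -/z ipBl !ipZl ip_Ustar_l ipBr !ipZr conjc_real conjcK.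
by rewrite -wy -(resolventP c1 x) -/z ipBr ipZr conjcK ipBl ipZl ip_Ustar_l.
Qed.

Lemma ipnorm_cayley_le c x : cabs c < 1 ->
  nrm (cayley c x) * (1 - cabs c) <= (`|delta| + cabs c) * nrm x.
Proof.
move=> c1; rewrite /cayley; set z := resolvent c x.
have zx : nrm z * (1 - cabs c) <= nrm x := ipnorm_resolvent_le c1 x.
have : nrm (delta%:C%C *: Ustar z - c *: z) <= (`|delta| + cabs c) * nrm z.
  by apply: le_trans (ler_ipnormB _ _) _; rewrite !ipnormZ Ustar_isometry cabs_real mulrDl.
have := cabs_ge0 c; have := normr_ge0 delta; have := ipnorm_ge0 z; nra.
Qed.

Lemma cayley_contraction c : cabs c < 1 ->
    cabs (c *+ 2 - (delta%:C%C * conjc c) *+ 2) < 1 - delta ^+ 2 ->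
  exists2 r, 0 <= r < 1 & forall x, nrm (cayley c x) <= r * nrm x.
Proof.
move=> c1; set k := _ - _ => k_lt; set eps := 1 - delta ^+ 2 - cabs k.
have eps0 : 0 < eps by rewrite /eps; lra.
have eps1 : eps <= 1 by have := cabs_ge0 k; have := sqr_ge0 delta; rewrite /eps; lra.
(* |cayley c x|^2 <= |x|^2 - eps |z|^2 and |x| <= 2 |z| *)
exists (1 - eps / 8); first by apply/andP; split; lra.
move=> x; set z := resolvent c x; have zx := resolventP c1 x; rewrite -/z in zx.
have := ipnorm_sqr_exchange delta c (Ustar_isometry z).
rewrite -/k zx -/(cayley c x) => exch.
have Re_le : complex.Re (k * ip (Ustar z) z) <= cabs k * nrm z ^+ 2.
  rewrite -ipZl; apply: le_trans (Re_ip_le _ _) _.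
  by rewrite ipnormZ Ustar_isometry expr2 mulrA.
have xz : nrm x <= 2 * nrm z.
  rewrite -zx; apply: le_trans (ler_ipnormB _ _) _; rewrite ipnormZ Ustar_isometry.
  have := ipnorm_ge0 z; have := cabs_ge0 c; nra.
rewrite -(ler_pXn2r (_ : 0 < 2)%N) ?nnegrE ?ipnorm_ge0 ?mulr_ge0 ?ipnorm_ge0 //; last lra.
rewrite exch exprMn.
have := ipnorm_ge0 z; have := ipnorm_ge0 x; move: Re_le xz eps0 eps1.
rewrite /eps; set K := cabs k; set P := complex.Re _; set Z := nrm z; set X := nrm x.
move=> Re_le xz eps0 eps1 X0 Z0.
have : 0 <= (1 - delta ^+ 2 - K) * (4 * Z ^+ 2 - X ^+ 2) by apply: mulr_ge0; nra.
have := sqr_ge0 ((1 - delta ^+ 2 - K) * X); nra.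
Qed.

Definition dcayley (c c' : C) (x : M) : M :=
  cayley c (Ustar (resolvent c' x)) - resolvent c' x.

Lemma cayleyB_dcayley c c' x : cabs c < 1 -> cabs c' < 1 ->
  cayley c' x - cayley c x = (c' - c) *: dcayley c c' x.
Proof.
move=> c1 c'1; rewrite /dcayley {3}/cayley; set z' := resolvent c' x.
set g := resolvent c (Ustar z').
have gE : (c' - c) *: g = z' - resolvent c x by rewrite resolvent_identity.
rewrite !scalerBr scalerA [(c' - c) * _]mulrC -scalerA -UstarZ gE.
rewrite scalerA [(c' - c) * c]mulrC -scalerA gE UstarB !scalerBr scalerBl.
by rewrite /cayley -/z' subrACA [RHS]addrAC -[RHS]addrA -opprD subrKA.
Qed.

Section DcayleyBounds.
Hypothesis delta_le1 : `|delta| <= 1.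
Variable q : R.
Hypothesis q_lt1 : q < 1.

Let ipnorm_cayley_Ustar_subr_le c y : cabs c <= q ->
  nrm (cayley c (Ustar y) - y) * (1 - q) <= 3 * nrm y.
Proof.
move=> cq; have c1 := le_lt_trans cq q_lt1; have c0 := cabs_ge0 c.
have q1 := q_lt1; have d1 := delta_le1.
have := ipnorm_cayley_le (Ustar y) c1; rewrite Ustar_isometry.
set A := nrm (cayley c _); set Y := nrm y => AY.
have A0 : 0 <= A := ipnorm_ge0 _; have Y0 : 0 <= Y := ipnorm_ge0 _.
have h1 : nrm (cayley c (Ustar y) - y) * (1 - q) <= (A + Y) * (1 - q).
  by rewrite ler_wpM2r ?ler_ipnormB //; lra.
have h2 : A * (1 - q) <= A * (1 - cabs c) by apply: ler_wpM2l; lra.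
have h3 : (`|delta| + cabs c) * Y <= 2 * Y by apply: ler_wpM2r; lra.
have h4 : 0 <= Y * q by apply: mulr_ge0; lra.
lra.
Qed.

Lemma ipnorm_dcayley_le c c' x : cabs c <= q -> cabs c' <= q ->
  nrm (dcayley c c' x) <= 3 / (1 - q) ^+ 2 * nrm x.
Proof.
move=> cq c'q; rewrite mulrAC ler_pdivlMr ?exprn_gt0 ?subr_gt0 //.
have := ipnorm_cayley_Ustar_subr_le (resolvent c' x) cq; rewrite -/(dcayley c c' x).
have := ipnorm_resolvent_le (le_lt_trans c'q q_lt1) x.
set D := nrm (dcayley _ _ _); set Z := nrm (resolvent c' x); have q1 := q_lt1 => ZX DZ.
have Z0 : 0 <= Z := ipnorm_ge0 _.
have h1 : D * (1 - q) * (1 - q) <= 3 * Z * (1 - q) by apply: ler_wpM2r; lra.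
have h2 : Z * (1 - q) <= Z * (1 - cabs c') by apply: ler_wpM2l; lra.
by rewrite expr2 mulrA; lra.
Qed.

Lemma ipnorm_dcayleyB_le c c' c'' x : cabs c <= q -> cabs c' <= q -> cabs c'' <= q ->
  nrm (dcayley c c' x - dcayley c c'' x) <= 3 / (1 - q) ^+ 3 * cabs (c' - c'') * nrm x.
Proof.
move=> cq c'q c''q; have c1 := le_lt_trans cq q_lt1.
rewrite -mulrA mulrAC ler_pdivlMr ?exprn_gt0 ?subr_gt0 //.
have -> : dcayley c c' x - dcayley c c'' x =
    cayley c (Ustar (resolvent c' x - resolvent c'' x)) - (resolvent c' x - resolvent c'' x).
  by rewrite /dcayley UstarB (zmod_morphism_linear (cayley_linear c1)) subrACA.
have := ipnorm_cayley_Ustar_subr_le (resolvent c' x - resolvent c'' x) cq.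
have := ipnorm_resolventB_le x c''q c'q q_lt1.
set W := nrm (resolvent c' x - _); set N := nrm (_ - _); have q1 := q_lt1 => WX NW.
have h : N * (1 - q) * (1 - q) ^+ 2 <= 3 * W * (1 - q) ^+ 2.
  by apply: ler_wpM2r; rewrite ?exprn_ge0 //; lra.
by rewrite exprS mulrA [_ * (1 - q)]mulrC; lra.
Qed.

End DcayleyBounds.

Section LambdaU.
Hypothesis delta01 : 0 < delta < 1.
Local Notation G := (G_delta delta).
Local Notation lam_U := (lamU delta Ustar).

Let q := (1 + delta) / 2.
Let q_lt1 : q < 1. Proof. by have /andP[_ d1] := delta01; rewrite /q; lra. Qed.
Let half_le p : G p -> cabs (p / 2) <= q. Proof. exact: G_delta_half_le. Qed.
Let half_lt1 p : G p -> cabs (p / 2) < 1. Proof. by move/half_le/le_lt_trans; apply. Qed.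
Let delta_le1 : `|delta| <= 1.
Proof. by have /andP[d0 d1] := delta01; rewrite ger0_norm ?ltW. Qed.

Lemma lamU_linear p : G p -> linear (lam_U p).
Proof. by move/half_lt1/cayley_linear. Qed.

Lemma lamU_adjointP p x y : G p -> ip (lam_U p x) y = ip x (hadj ip (lam_U p) y).
Proof. by move/half_lt1/(cayley_adjoint y)/hadjP; apply. Qed.

Lemma lamU_contraction p : G p -> exists2 r, 0 <= r < 1 & forall x, nrm (lam_U p x) <= r * nrm x.
Proof.
move=> Gp; apply: cayley_contraction; first exact: half_lt1.
have -> : (p / 2) *+ 2 - (delta%:C%C * conjc (p / 2)) *+ 2 = p - delta%:C%C * conjc p.
  by rewrite rmorphM fmorphV rmorph_nat; field.
exact: G_delta_cabs_lt.
Qed.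

Definition dlamU l0 p x := 2^-1 *: dcayley (l0 / 2) (p / 2) x.

Lemma lamUB_dlamU l0 p x : G l0 -> G p -> lam_U p x - lam_U l0 x = (p - l0) *: dlamU l0 p x.
Proof.
move=> Gl0 Gp; rewrite /dlamU scalerA mulrBl.
by rewrite !lamU_cayley cayleyB_dcayley ?half_lt1.
Qed.

Lemma ipnorm_dlamU_le l0 p x : G l0 -> G p -> nrm (dlamU l0 p x) <= 3 / (1 - q) ^+ 2 * nrm x.
Proof.
move=> Gl0 Gp; rewrite /dlamU ipnormZ cabsV cabs_nat.
apply: le_trans (ler_piMl (ipnorm_ge0 _) _) _; first by rewrite invf_le1 ?ler1n.
exact (ipnorm_dcayley_le delta_le1 q_lt1 x (half_le Gl0) (half_le Gp)).
Qed.

Lemma ipnorm_dlamUB_le l0 p p' x : G l0 -> G p -> G p' ->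
  nrm (dlamU l0 p x - dlamU l0 p' x) <= 3 / (1 - q) ^+ 3 * cabs (p - p') * nrm x.
Proof.
move=> Gl0 Gp Gp'; rewrite /dlamU -scalerBr ipnormZ cabsV cabs_nat.
apply: le_trans (ler_piMl (ipnorm_ge0 _) _) _; first by rewrite invf_le1 ?ler1n.
apply: le_trans (ipnorm_dcayleyB_le delta_le1 q_lt1 x (half_le Gl0) (half_le Gp) (half_le Gp')) _.
rewrite -mulrBl cabs_half; apply: ler_wpM2r; first exact: ipnorm_ge0.
apply: ler_wpM2l; first by rewrite divr_ge0 // exprn_ge0 // subr_ge0 ltW.
by have := cabs_ge0 (p - p'); lra.
Qed.

Theorem lamU_gram_holomorphic (f : C -> C) (u : C -> M) :
    (forall lam mu, G lam -> G mu ->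
       1 - conjc (f mu) * f lam = ip (u lam - hadj ip (lam_U mu) (lam_U lam (u lam))) (u mu)) ->
  holomorphic_on ip G u.
Proof.
move=> hyp l0 Gl0.
have gram p p' : G p -> G p' ->
    ip (u p) (u p') = 1 - conjc (f p') * f p + ip (lam_U p (u p)) (lam_U p' (u p')).
  by move=> Gp Gp'; rewrite hyp // ipBl (ipC (u p') (hadj _ _ _)) -lamU_adjointP // -ipC subrK.
have [r /andP[r0 r1] contr] := lamU_contraction Gl0.
have K_ge0 n : 0 <= 3 / (1 - q) ^+ n by rewrite divr_ge0 // exprn_ge0 // subr_ge0 ltW.
apply: (gram_derivable_at lamU_linear gram Gl0 r0 r1 (K_ge0 2%N) (K_ge0 3%N) contr).
- by move=> p x Gp; apply: lamUB_dlamU.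
- by move=> p x Gp; apply: ipnorm_dlamU_le.
- by move=> p p' x Gp Gp'; apply: ipnorm_dlamUB_le.
- exact: G_delta_limit_point.
Qed.

End LambdaU.

End Unitary.
End Complete.
End InnerProduct.

Theorem proposition2p8 (R : realType) (delta : R) (f : R[i] -> R[i])
  (M : lmodType R[i]) (ip : M -> M -> R[i]) (U Ustar : M -> M)
  (u : R[i] -> M) :
  0 < delta < 1 ->
  is_hilbert ip ->
  is_unitary_op ip U Ustar ->
  (forall lam mu : R[i], G_delta delta lam -> G_delta delta mu ->
     1 - conjc (f mu) * f lam =
     ip (u lam - hadj ip (lamU delta Ustar mu) (lamU delta Ustar lam (u lam)))
        (u mu)) ->
  holomorphic_on ip (G_delta delta) u.
Proof.
move=> delta01 [ipDZl ipC ip_self_ge0 ip_self_eq0 ip_complete] [U_linear U_adjoint UK UstarK].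
exact: lamU_gram_holomorphic.
Qed.
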